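(* Let $d:E\to\mathbb{Z}_{>0}$ be a positive integer edge cost, $M$ a positive integer, and $e_0\in E$ an edge with $d(e_0)$ even. Define $d_1:E\to\mathbb{Z}_+$ by $d_1(e_0)=d(e_0)-1$ and $d_1(e)=d(e)$ for $e\neq e_0$. If $p\in\mathbb{G}^n$ is a minimizer of $h_{d,M}$, then there exists a minimizer $q\in\mathbb{G}^n$ of $h_{d_1,M}$ with $\|p-q\|\le 2$.
   Context: Network: simple undirected graph $(V,E)$, $V=\{1,\dots,n\}$, terminals $S=\{1,\dots,k\}\subseteq V$, $k\ge3$, no edge between two terminals, node capacities $c:V\setminus S\to\mathbb{Z}_+$. Grid: the infinite $k$-star $\mathbb{T}$ is $\mathbb{R}_+\times\{1,\dots,k\}$ with all $(0,s)$ identified to a point $0$; $(x,s)$ is also written $x$; $\mathrm{dist}((x,s),(x',s'))=|x-x'|$ if $s=s'$, $x+x'$ otherwise. $x$ is integral if $\mathrm{dist}(x,0)\in\mathbb{Z}$, proper half-integral if $2\mathrm{dist}(x,0)\in\mathbb{Z}$ but $\mathrm{dist}(x,0)\notin\mathbb{Z}$. $\mathbb{G}\subseteq\mathbb{T}\times\mathbb{R}$ is the set of $(x,y)$ with $x,y$ both integral or both proper half-integral. For $(x,y),(x',y')$ put $\|(x,y)-(x',y')\|=\mathrm{dist}(x,x')+|y-y'|$, and for $p,q\in\mathbb{G}^n$, $\|p-q\|=\max_i\|p_i-q_i\|$. Potential for $d$ and $M$: $(x,y)=((x_1,y_1),\dots,(x_n,y_n))\in\mathbb{G}^n$ with $\mathrm{dist}(x_i,x_j)-y_i-y_j\le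 2d(ij)$ for all $ij\in E$, $(x_s,y_s)=((M,s),0)$ for $s\in S$, $y_i\ge0$ and $\mathrm{dist}(0,x_i)\le M$ for all $i\in V$. $h_{d,M}(x,y)=\sum_{i\in V\setminus S}c_iy_i$ if $(x,y)$ is a potential for $d$ and $M$, and $+\infty$ otherwise. *)

From Stdlib Require Import Reals List Arith ZArith.
From Coquelicot Require Import Rbar.
From Stdlib Require Import ClassicalDescription.
Open Scope R_scope.

(* A point of the infinite k-star T: a radius r >= 0 on leg s (1 <= s <= k).
   All points with r = 0 represent the same point 0; only tdist is used. *)
Record Tpt := mkT { tr : R; tleg : nat }.

Definition valid_T (k : nat) (x : Tpt) : Prop :=
  0 <= tr x /\ (1 <= tleg x <= k)%nat.

Definition tdist (x x' : Tpt) : R :=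
  if Nat.eqb (tleg x) (tleg x') then Rabs (tr x - tr x') else tr x + tr x'.

Definition is_int (r : R) : Prop := exists z : Z, r = IZR z.
Definition is_proper_half (r : R) : Prop := exists z : Z, r = IZR z + / 2.

(* x is integral iff dist(x,0) = tr x is an integer, proper half-integral
   iff tr x is an integer plus 1/2. *)
Definition in_G (k : nat) (p : Tpt * R) : Prop :=
  valid_T k (fst p) /\
  ((is_int (tr (fst p)) /\ is_int (snd p)) \/
   (is_proper_half (tr (fst p)) /\ is_proper_half (snd p))).

Definition in_Gn (n k : nat) (p : nat -> Tpt * R) : Prop :=
  forall i, (1 <= i <= n)%nat -> in_G k (p i).

Definition gdist (a b : Tpt * R) : R :=
  tdist (fst a) (fst b) + Rabs (snd a - snd b).

Definition gnorm (n : nat) (p q : nat -> Tpt * R) : R :=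
  fold_right Rmax 0 (map (fun i => gdist (p i) (q i)) (seq 1 n)).

(* Network: V = {1..n}, S = {1..k}, edge relation E, capacities c on V\S. *)
Definition simple_network (n k : nat) (E : nat -> nat -> Prop) : Prop :=
  (3 <= k <= n)%nat /\
  (forall i j, E i j -> (1 <= i <= n)%nat /\ (1 <= j <= n)%nat /\ i <> j) /\
  (forall i j, E i j -> E j i) /\
  (forall i j, E i j -> ~ ((i <= k)%nat /\ (j <= k)%nat)).

Definition is_potential (n k : nat) (E : nat -> nat -> Prop)
    (d : nat -> nat -> nat) (M : nat) (p : nat -> Tpt * R) : Prop :=
  (forall i j, E i j ->
     tdist (fst (p i)) (fst (p j)) - snd (p i) - snd (p j) <= 2 * INR (d i j)) /\
  (forall s, (1 <= s <= k)%nat ->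
     tr (fst (p s)) = INR M /\ tleg (fst (p s)) = s /\ snd (p s) = 0) /\
  (forall i, (1 <= i <= n)%nat ->
     0 <= snd (p i) /\ tdist (mkT 0 1) (fst (p i)) <= INR M).

Definition cost (n k : nat) (c : nat -> nat) (p : nat -> Tpt * R) : R :=
  fold_right Rplus 0 (map (fun i => INR (c i) * snd (p i)) (seq (S k) (n - k))).

Definition h (n k : nat) (E : nat -> nat -> Prop) (c : nat -> nat)
    (d : nat -> nat -> nat) (M : nat) (p : nat -> Tpt * R) : Rbar :=
  if excluded_middle_informative (is_potential n k E d M p)
  then Finite (cost n k c p) else p_infty.

Definition is_minimizer (n k : nat) (E : nat -> nat -> Prop) (c : nat -> nat)
    (d : nat -> nat -> nat) (M : nat) (p : nat -> Tpt * R) : Prop :=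
  in_Gn n k p /\
  forall q, in_Gn n k q -> Rbar_le (h n k E c d M p) (h n k E c d M q).

Definition dec_edge (d : nat -> nat -> nat) (a b : nat) : nat -> nat -> nat :=
  fun i j => if ((Nat.eqb i a && Nat.eqb j b) || (Nat.eqb i b && Nat.eqb j a))%bool
             then (d i j - 1)%nat else d i j.

From Stdlib Require Import Reals Lra Lia ZArith Arith List Classical ClassicalDescription Wf_nat.
From Coquelicot Require Import Rbar.

(* Let q be a d1-minimizer that, among all d1-minimizers, minimizes the total distance
   sum_i ||p_i - q_i||, and suppose ||p_i0 - q_i0|| > 2. In the rotated coordinates
   dist(0, x) +- y of the star, push q one unit towards p, and p one unit towards q, in every
   coordinate where the two differ by at least a threshold adapted to ||p_i0 - q_i0||. Such
   threshold roundings preserve difference constraints, so the pushed p is a d-potential and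
   the pushed q satisfies every d1-constraint except perhaps the one on e0; there the bound
   for q is 2 below the one for p, and of two candidate thresholds at least one works. The two
   pushes just exchange heights, so by minimality of p the pushed q costs no more than q: it is
   a d1-minimizer strictly closer to p, a contradiction. *)

Local Open Scope Z_scope.

(* A point (x, y) of G in doubled coordinates: radius 2 dist(0, x) on leg [zleg], height 2 y.
   Being both integral or both proper half-integral becomes the parity condition in [zvalid]. *)
Record zpt := ZPt { zrad : Z; zleg : nat; zhgt : Z }.

Definition zvalid (P : zpt) : Prop :=
  0 <= zrad P /\ 0 <= zhgt P /\ Z.Even (zrad P + zhgt P).

Definition zdist (P Q : zpt) : Z :=
  if Nat.eqb (zleg P) (zleg Q) then Z.abs (zrad P - zrad Q) else zrad P + zrad Q.

Definition zgdist (P Q : zpt) : Z := zdist P Q + Z.abs (zhgt P - zhgt Q).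

Definition zgap (P Q : zpt) : Z := zdist P Q - zhgt P - zhgt Q.

(* The position of [P] once all legs other than [s] are folded onto the negative half-line;
   [zdist] is the maximum over [s] of these projections, and [zup], [zdown] are the rotated
   coordinates in which the edge constraints of a potential become difference constraints. *)
Definition zcoord (P : zpt) (s : nat) : Z := if Nat.eqb (zleg P) s then zrad P else - zrad P.

Definition zup (P : zpt) (s : nat) : Z := zcoord P s + zhgt P.
Definition zdown (P : zpt) (s : nat) : Z := zcoord P s - zhgt P.

Definition zstep (c x : Z) : Z :=
  if Z.leb (2 * c) x then 1 else if Z.leb x (- (2 * c)) then -1 else 0.

(* [zpush c X W] moves [X] by one (undoubled) unit towards [W] along each of the two rotated
   coordinates in which [W] is at least [2c] away. *)
Definition zpush (c : Z) (X W : zpt) : zpt :=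
  let D := zdist X W in
  let gu := zstep c (D + (zhgt W - zhgt X)) in
  let gd := zstep c (D - (zhgt W - zhgt X)) in
  if Nat.eqb (zleg X) (zleg W) then
    ZPt (if Z.leb (zrad X) (zrad W) then zrad X + (gu + gd) else zrad X - (gu + gd))
        (zleg X) (zhgt X + (gu - gd))
  else if Z.leb (gu + gd) (zrad X) then ZPt (zrad X - (gu + gd)) (zleg X) (zhgt X + (gu - gd))
  else ZPt ((gu + gd) - zrad X) (zleg W) (zhgt X + (gu - gd)).

Ltac destruct_tests := repeat match goal with
  | |- context [Nat.eqb ?a ?b] => destruct (Nat.eqb_spec a b)
  | |- context [Z.leb ?a ?b] => destruct (Z.leb_spec a b)
  | H : context [Nat.eqb ?a ?b] |- _ => destruct (Nat.eqb_spec a b)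
  | H : context [Z.leb ?a ?b] |- _ => destruct (Z.leb_spec a b)
  end.

Ltac destruct_zvalid := repeat match goal with
  | H : zvalid _ |- _ =>
      let r := fresh "Hr" in let y := fresh "Hy" in let m := fresh "m" in let e := fresh "He" in
      destruct H as [r [y [m e]]]
  end.

Ltac unfold_zpt P := let r := fresh "r" in let t := fresh "t" in let y := fresh "y" in
  destruct P as [r t y]; cbn [zrad zleg zhgt] in *.

Ltac zbrute := unfold zpush, zstep, zgap, zgdist, zdist, zup, zdown, zcoord in *;
  cbn [zrad zleg zhgt] in *; destruct_tests; cbn [zrad zleg zhgt] in *; destruct_tests; lia.

Lemma zdist_sym P Q : zdist P Q = zdist Q P.
Proof. unfold zdist; destruct_tests; lia. Qed.

Lemma zgap_sym P Q : zgap P Q = zgap Q P.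
Proof. unfold zgap; rewrite zdist_sym; lia. Qed.

Lemma zcoord_sub_le_zdist P Q s : 0 <= zrad P -> 0 <= zrad Q ->
  zcoord Q s - zcoord P s <= zdist P Q.
Proof. intros; unfold zcoord, zdist; destruct_tests; lia. Qed.

Lemma zdist_eq_zcoord_sub P Q : 0 <= zrad P -> 0 <= zrad Q ->
  zdist P Q = zcoord Q (zleg Q) - zcoord P (zleg Q) \/
  zdist P Q = zcoord P (zleg P) - zcoord Q (zleg P).
Proof. intros; unfold zcoord, zdist; destruct_tests; lia. Qed.

Lemma zup_even P s : zvalid P -> Z.Even (zup P s).
Proof.
  intros HP; destruct_zvalid; unfold zup, zcoord; destruct_tests.
  - exists m; lia.
  - exists (m - zrad P); lia.
Qed.

Lemma zdown_even P s : zvalid P -> Z.Even (zdown P s).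
Proof.
  intros HP; destruct_zvalid; unfold zdown, zcoord; destruct_tests.
  - exists (m - zhgt P); lia.
  - exists (- m); lia.
Qed.

Lemma Z_Even_sub x y : Z.Even x -> Z.Even y -> Z.Even (x - y).
Proof. intros [a ->] [b ->]; exists (a - b); lia. Qed.

Lemma zstep_sub_le c u v : 1 <= c -> Z.Even u -> Z.Even v ->
  2 * zstep c v - 2 * zstep c u <= Z.max 0 (v - u).
Proof. intros Hc [a ->] [b ->]; unfold zstep; destruct_tests; lia. Qed.

Lemma zup_zpush_ge c X W s : 1 <= c -> zvalid X -> zvalid W ->
  zup X s + 2 * zstep c (zup W s - zup X s) <= zup (zpush c X W) s.
Proof. intros Hc HX HW; destruct_zvalid; unfold_zpt X; unfold_zpt W; zbrute. Qed.

Lemma zleg_zpush c X W : zleg (zpush c X W) = zleg X \/ zleg (zpush c X W) = zleg W.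
Proof. unfold zpush; destruct_tests; cbn [zleg]; auto. Qed.

Lemma zdown_zpush c X W s : 1 <= c -> zvalid X -> zvalid W -> (s = zleg X \/ s = zleg W) ->
  zdown (zpush c X W) s = zdown X s + 2 * zstep c (zdown W s - zdown X s).
Proof.
  intros Hc HX HW Hs; destruct_zvalid; unfold_zpt X; unfold_zpt W.
  destruct Hs as [->| ->]; zbrute.
Qed.

Lemma zpush_valid c X W : 1 <= c -> zvalid X -> zvalid W -> zvalid (zpush c X W).
Proof.
  intros Hc HX HW; destruct_zvalid; unfold_zpt X; unfold_zpt W.
  unfold zvalid, zpush, zstep, zdist; cbn [zrad zleg zhgt];
  destruct_tests; cbn [zrad zleg zhgt]; destruct_tests;
  (split; [lia | split; [lia | ]]);
  match goal with |- Z.Even (?a + ?b) => exists ((a + b) / 2) end; Z.div_mod_to_equations; lia.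
Qed.

Lemma zrad_zpush_le c X W : 1 <= c -> zvalid X -> zvalid W ->
  zrad (zpush c X W) <= Z.max (zrad X) (zrad W).
Proof. intros Hc HX HW; destruct_zvalid; unfold_zpt X; unfold_zpt W; zbrute. Qed.

Lemma zhgt_zpush_add c X W : zhgt (zpush c X W) + zhgt (zpush c W X) = zhgt X + zhgt W.
Proof. unfold_zpt X; unfold_zpt W; zbrute. Qed.

Lemma zpush_id c X : 1 <= c -> zpush c X X = X.
Proof.
  intros Hc; unfold_zpt X; unfold zpush, zstep, zdist; cbn [zrad zleg zhgt].
  rewrite Nat.eqb_refl; destruct_tests; try lia; f_equal; lia.
Qed.

Lemma zgdist_zpush c X W : 1 <= c -> zvalid X -> zvalid W ->
  zgdist W (zpush c X W) <= zgdist W X /\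
  (2 * c <= zgdist W X -> zgdist W (zpush c X W) <= zgdist W X - 2).
Proof. intros Hc HX HW; destruct_zvalid; unfold_zpt X; unfold_zpt W; zbrute. Qed.

Lemma zgdist_even P Q : zvalid P -> zvalid Q -> Z.Even (zgdist P Q).
Proof.
  intros HP HQ; destruct_zvalid; exists (zgdist P Q / 2).
  unfold_zpt P; unfold_zpt Q; unfold zgdist, zdist; cbn [zrad zleg zhgt];
  destruct_tests; Z.div_mod_to_equations; lia.
Qed.

Lemma zgdist_nonneg P Q : zvalid P -> zvalid Q -> 0 <= zgdist P Q.
Proof. intros HP HQ; destruct_zvalid; unfold zgdist, zdist; destruct_tests; lia. Qed.

Lemma zdown_sub_zup_le_zgap P Q s : zvalid P -> zvalid Q -> zdown Q s - zup P s <= zgap P Q.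
Proof.
  intros [HP _] [HQ _]; pose proof (zcoord_sub_le_zdist P Q s HP HQ).
  unfold zdown, zup, zgap; lia.
Qed.

Lemma zgap_eq P Q : zvalid P -> zvalid Q ->
  zgap P Q = zdown Q (zleg Q) - zup P (zleg Q) \/ zgap P Q = zdown P (zleg P) - zup Q (zleg P).
Proof.
  intros [HP _] [HQ _]; unfold zdown, zup, zgap.
  destruct (zdist_eq_zcoord_sub P Q HP HQ); lia.
Qed.

(* Coordinatewise, [zpush] is the map x |-> x + 2 zstep (w - x), which is monotone in
   (x, w) with increments of slope at most 1; hence it preserves difference constraints. *)
Lemma zdown_sub_zup_zpush_le c Xi Wi Xj Wj s K : 1 <= c ->
  zvalid Xi -> zvalid Wi -> zvalid Xj -> zvalid Wj -> (s = zleg Xj \/ s = zleg Wj) ->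
  zdown Xj s - zup Xi s <= K -> zdown Wj s - zup Wi s <= K ->
  zdown (zpush c Xj Wj) s - zup (zpush c Xi Wi) s <= K.
Proof.
  intros Hc HXi HWi HXj HWj Hs HX HW.
  rewrite (zdown_zpush c Xj Wj s Hc HXj HWj Hs).
  pose proof (zup_zpush_ge c Xi Wi s Hc HXi HWi).
  pose proof (zstep_sub_le c (zup Wi s - zup Xi s) (zdown Wj s - zdown Xj s) Hc
    (Z_Even_sub _ _ (zup_even Wi s HWi) (zup_even Xi s HXi))
    (Z_Even_sub _ _ (zdown_even Wj s HWj) (zdown_even Xj s HXj))).
  lia.
Qed.

Lemma zgap_zpush_le c Xi Wi Xj Wj K : 1 <= c ->
  zvalid Xi -> zvalid Wi -> zvalid Xj -> zvalid Wj ->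
  zgap Xi Xj <= K -> zgap Wi Wj <= K -> zgap (zpush c Xi Wi) (zpush c Xj Wj) <= K.
Proof.
  intros Hc HXi HWi HXj HWj HX HW.
  destruct (zgap_eq _ _ (zpush_valid c Xi Wi Hc HXi HWi) (zpush_valid c Xj Wj Hc HXj HWj))
    as [-> | ->].
  - apply zdown_sub_zup_zpush_le; auto using zleg_zpush.
    + pose proof (zdown_sub_zup_le_zgap Xi Xj (zleg (zpush c Xj Wj)) HXi HXj); lia.
    + pose proof (zdown_sub_zup_le_zgap Wi Wj (zleg (zpush c Xj Wj)) HWi HWj); lia.
  - rewrite zgap_sym in HX, HW.
    apply zdown_sub_zup_zpush_le; auto using zleg_zpush.
    + pose proof (zdown_sub_zup_le_zgap Xj Xi (zleg (zpush c Xi Wi)) HXj HXi); lia.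
    + pose proof (zdown_sub_zup_le_zgap Wj Wi (zleg (zpush c Xi Wi)) HWj HWi); lia.
Qed.

Definition zpush_bound (c : Z) (pY qY pX qX : zpt) (s : nat) : Z :=
  zdown qY s - zup qX s + 2 * zstep c (zdown pY s - zdown qY s)
  - 2 * zstep c (zup pX s - zup qX s).

Lemma zgap_zpush_gt c pA qA pB qB K : 1 <= c ->
  zvalid pA -> zvalid qA -> zvalid pB -> zvalid qB ->
  zgap (zpush c qA pA) (zpush c qB pB) > K ->
  (exists s, (s = zleg qB \/ s = zleg pB) /\ zpush_bound c pB qB pA qA s > K) \/
  (exists s, (s = zleg qA \/ s = zleg pA) /\ zpush_bound c pA qA pB qB s > K).
Proof.
  intros Hc HpA HqA HpB HqB Hgt; unfold zpush_bound.
  destruct (zgap_eq _ _ (zpush_valid c qA pA Hc HqA HpA) (zpush_valid c qB pB Hc HqB HpB))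
    as [Hg | Hg]; rewrite Hg in Hgt.
  - left; exists (zleg (zpush c qB pB)); split; [apply zleg_zpush |].
    rewrite zdown_zpush in Hgt by auto using zleg_zpush.
    pose proof (zup_zpush_ge c qA pA (zleg (zpush c qB pB)) Hc HqA HpA); lia.
  - right; exists (zleg (zpush c qA pA)); split; [apply zleg_zpush |].
    rewrite zdown_zpush in Hgt by auto using zleg_zpush.
    pose proof (zup_zpush_ge c qB pB (zleg (zpush c qA pA)) Hc HqB HpB); lia.
Qed.

Definition threshold_crossing (c e Q w z : Z) : Prop :=
  z < w /\
  ((Q = 4 * e /\ w - z <= 4) \/ (c = 1 /\ 4 * e - 2 <= Q /\ w - z <= 6 /\ z <= -2 /\ 2 <= w)) /\
  ((z < 2 * c <= w) \/ (z <= - (2 * c) < w)).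

Lemma threshold_crossing_of_gt c e Q w z : 1 <= c ->
  Z.Even Q -> Z.Even w -> Z.Even z -> Q <= 4 * e -> Q + w - z <= 4 * e + 4 ->
  Q + 2 * zstep c w - 2 * zstep c z > 4 * e -> threshold_crossing c e Q w z.
Proof.
  intros Hc [a ->] [b ->] [d ->] H1 H2 H3.
  unfold threshold_crossing, zstep in *; destruct_tests; lia.
Qed.

Lemma threshold_crossing_of_zpush_bound c e pY qY pX qX s : 1 <= c ->
  zvalid pY -> zvalid qY -> zvalid pX -> zvalid qX ->
  zgap pX pY <= 4 * e + 4 -> zgap qX qY <= 4 * e -> zpush_bound c pY qY pX qX s > 4 * e ->
  threshold_crossing c e (zdown qY s - zup qX s) (zdown pY s - zdown qY s) (zup pX s - zup qX s).
Proof.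
  intros Hc HpY HqY HpX HqX Hp Hq Hb.
  pose proof (zdown_sub_zup_le_zgap qX qY s HqX HqY).
  pose proof (zdown_sub_zup_le_zgap pX pY s HpX HpY).
  apply threshold_crossing_of_gt; auto using Z_Even_sub, zup_even, zdown_even; lia.
Qed.

Ltac subst_legs := repeat (first [ progress (rewrite ?Nat.eqb_refl in * ) | match goal with
  | H : context [Nat.eqb ?a ?b] |- _ => destruct (Nat.eqb_spec a b); [subst |]
  end]).

(* A crossing for the threshold [c] makes [zgap qA qB] (nearly) tight on the crossing leg and
   pins [2c] or [-2c] in a window of width at most 4 (6 when [c = 1]); the windows cannot
   accommodate both [c] and [c + 2]. *)
Lemma no_double_crossing c e pA qA pB qB : 1 <= c -> 1 <= e ->
  zvalid pA -> zvalid qA -> zvalid pB -> zvalid qB ->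
  zgap pA pB <= 4 * e + 4 -> zgap qA qB <= 4 * e ->
  ~ (zgap (zpush c qA pA) (zpush c qB pB) > 4 * e /\
     zgap (zpush (c + 2) qA pA) (zpush (c + 2) qB pB) > 4 * e).
Proof.
  intros Hc He HpA HqA HpB HqB Hp Hq [C1 C2].
  assert (Hp' : zgap pB pA <= 4 * e + 4) by (rewrite zgap_sym; lia).
  assert (Hq' : zgap qB qA <= 4 * e) by (rewrite zgap_sym; lia).
  apply zgap_zpush_gt in C1; auto; apply zgap_zpush_gt in C2; auto; try lia.
  destruct C1 as [[s1 [Hs1 C1]] | [s1 [Hs1 C1]]];
  (apply threshold_crossing_of_zpush_bound in C1; auto; try lia);
  destruct C2 as [[s2 [Hs2 C2]] | [s2 [Hs2 C2]]];
  (apply threshold_crossing_of_zpush_bound in C2; auto; try lia);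
  destruct Hs1 as [-> | ->]; destruct Hs2 as [-> | ->];
  clear Hp' Hq'; destruct_zvalid;
  unfold threshold_crossing, zgap, zdown, zup, zcoord, zdist in *;
  unfold_zpt pA; unfold_zpt qA; unfold_zpt pB; unfold_zpt qB;
  subst_legs; lia.
Qed.

Lemma zgap_zpush_threshold c0 e pA qA pB qB : 1 <= c0 -> 1 <= e ->
  zvalid pA -> zvalid qA -> zvalid pB -> zvalid qB ->
  zgap pA pB <= 4 * e + 4 -> zgap qA qB <= 4 * e ->
  exists c, (c = c0 \/ c = c0 + 2) /\ zgap (zpush c qA pA) (zpush c qB pB) <= 4 * e.
Proof.
  intros Hc He HpA HqA HpB HqB Hp Hq.
  destruct (Z_le_gt_dec (zgap (zpush c0 qA pA) (zpush c0 qB pB)) (4 * e)) as [G | G].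
  { exists c0; auto. }
  destruct (Z_le_gt_dec (zgap (zpush (c0 + 2) qA pA) (zpush (c0 + 2) qB pB)) (4 * e)) as [G' | G'].
  { exists (c0 + 2); auto. }
  exfalso; apply (no_double_crossing c0 e pA qA pB qB); auto.
Qed.

Definition zsum (f : nat -> Z) (l : list nat) : Z := fold_right Z.add 0 (map f l).

Lemma zsum_le f g l : (forall i, In i l -> f i <= g i) -> zsum f l <= zsum g l.
Proof.
  unfold zsum; induction l as [| x l IH]; cbn; intros H; [lia |].
  specialize (IH (fun i Hi => H i (or_intror Hi))); specialize (H x (or_introl eq_refl)); lia.
Qed.

Lemma zsum_lt f g l : (forall i, In i l -> f i <= g i) -> (exists i, In i l /\ f i < g i) ->
  zsum f l < zsum g l.
Proof.
  induction l as [| x l IH]; intros H [i [Hi Hlt]]; [destruct Hi |].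
  assert (Hx := H x (or_introl eq_refl)); unfold zsum in *; cbn in *.
  destruct Hi as [-> | Hi].
  - pose proof (zsum_le f g l (fun j Hj => H j (or_intror Hj))); unfold zsum in *; lia.
  - enough (fold_right Z.add 0 (map f l) < fold_right Z.add 0 (map g l)) by lia.
    apply IH; eauto.
Qed.

Lemma zsum_nonneg f l : (forall i, In i l -> 0 <= f i) -> 0 <= zsum f l.
Proof.
  unfold zsum; induction l as [| x l IH]; cbn; intros H; [lia |].
  specialize (IH (fun i Hi => H i (or_intror Hi))); specialize (H x (or_introl eq_refl)); lia.
Qed.

Lemma zsum_add f g l : zsum f l + zsum g l = zsum (fun i => f i + g i) l.
Proof. unfold zsum; induction l; cbn; lia. Qed.

Lemma Z_nonneg_least (P : Z -> Prop) : (exists z, P z) -> (forall z, P z -> 0 <= z) ->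
  exists z, P z /\ forall w, P w -> z <= w.
Proof.
  intros [z0 Hz0] Hpos.
  destruct (dec_inh_nat_subset_has_unique_least_element (fun m => P (Z.of_nat m)))
    as [m [[Hm Hmin] _]].
  - intros m; apply classic.
  - exists (Z.to_nat z0); rewrite Z2Nat.id; auto.
  - exists (Z.of_nat m); split; auto; intros w Hw.
    specialize (Hpos w Hw); specialize (Hmin (Z.to_nat w)); rewrite Z2Nat.id in Hmin; auto.
    specialize (Hmin Hw); lia.
Qed.

Lemma dec_edge_sym d a b i j : d i j = d j i -> dec_edge d a b i j = dec_edge d a b j i.
Proof.
  intros Hd; unfold dec_edge; rewrite Hd.
  destruct (Nat.eqb i a), (Nat.eqb j b), (Nat.eqb i b), (Nat.eqb j a); reflexivity.
Qed.

Lemma dec_edge_ab d a b : dec_edge d a b a b = (d a b - 1)%nat.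
Proof. unfold dec_edge; rewrite !Nat.eqb_refl; reflexivity. Qed.

Lemma dec_edge_le d a b i j : (dec_edge d a b i j <= d i j)%nat.
Proof. unfold dec_edge; destruct (_ || _)%bool; lia. Qed.

Lemma dec_edge_other d a b i j : ~ ((i = a /\ j = b) \/ (i = b /\ j = a)) ->
  dec_edge d a b i j = d i j.
Proof.
  intros H; unfold dec_edge.
  destruct (Nat.eqb_spec i a), (Nat.eqb_spec j b), (Nat.eqb_spec i b), (Nat.eqb_spec j a);
    cbn; tauto.
Qed.

Section Network.

Variables (n k : nat) (E : nat -> nat -> Prop) (M : nat) (c : nat -> nat).
Hypothesis Hnet : simple_network n k E.

Definition zpotential (dd : nat -> nat -> nat) (Q : nat -> zpt) : Prop :=
  (forall i j, E i j -> zgap (Q i) (Q j) <= 4 * Z.of_nat (dd i j)) /\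
  (forall s, (1 <= s <= k)%nat -> Q s = ZPt (2 * Z.of_nat M) s 0) /\
  (forall i, (1 <= i <= n)%nat ->
     zvalid (Q i) /\ (1 <= zleg (Q i) <= k)%nat /\ zrad (Q i) <= 2 * Z.of_nat M).

Definition zcost (Q : nat -> zpt) : Z :=
  zsum (fun i => Z.of_nat (c i) * zhgt (Q i)) (seq (S k) (n - k)).

Definition zminimizer (dd : nat -> nat -> nat) (Q : nat -> zpt) : Prop :=
  zpotential dd Q /\ forall Q', zpotential dd Q' -> zcost Q <= zcost Q'.

Definition ztotal_dist (P Q : nat -> zpt) : Z := zsum (fun i => zgdist (P i) (Q i)) (seq 1 n).

Definition zpush_map (cc : Z) (X W : nat -> zpt) : nat -> zpt := fun i => zpush cc (X i) (W i).

Definition zapex (i : nat) : zpt :=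
  if Nat.leb i k then ZPt (2 * Z.of_nat M) i 0 else ZPt 0 1 (2 * Z.of_nat M).

Lemma zpotential_zapex dd : zpotential dd zapex.
Proof.
  destruct Hnet as [Hkn [HE [_ Hnt]]]; split; [| split].
  - intros i j Hij; destruct (HE i j Hij) as [Hi [Hj _]]; pose proof (Hnt i j Hij).
    unfold zapex, zgap, zdist.
    destruct (Nat.leb_spec i k), (Nat.leb_spec j k); cbn [zrad zleg zhgt];
      try lia; destruct_tests; lia.
  - intros s Hs; unfold zapex; destruct (Nat.leb_spec s k); [reflexivity | lia].
  - intros i Hi; unfold zapex, zvalid.
    destruct (Nat.leb_spec i k); cbn [zrad zleg zhgt];
      (split; [repeat split; [lia | lia | exists (Z.of_nat M); lia] | lia]).
Qed.

Lemma zcost_nonneg dd Q : zpotential dd Q -> 0 <= zcost Q.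
Proof.
  intros [_ [_ HQ]]; apply zsum_nonneg; intros i Hi; apply in_seq in Hi.
  destruct (HQ i ltac:(lia)) as [[_ [Hy _]] _]; lia.
Qed.

Lemma zpush_potential cc dX dW d' X W : 1 <= cc -> zpotential dX X -> zpotential dW W ->
  (forall i j, E i j -> (dX i j <= d' i j /\ dW i j <= d' i j)%nat \/
     zgap (zpush cc (X i) (W i)) (zpush cc (X j) (W j)) <= 4 * Z.of_nat (d' i j)) ->
  zpotential d' (zpush_map cc X W).
Proof.
  intros Hc [HXe [HXt HXr]] [HWe [HWt HWr]] Hedge; unfold zpush_map.
  destruct Hnet as [_ [HE _]]; split; [| split].
  - intros i j Hij; destruct (HE i j Hij) as [Hi [Hj _]].
    destruct (Hedge i j Hij) as [[Hx Hw] | Hg]; [| exact Hg].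
    specialize (HXe i j Hij); specialize (HWe i j Hij).
    apply zgap_zpush_le; try apply HXr; try apply HWr; auto; lia.
  - intros s Hs; rewrite HXt, <- (HWt s Hs) by exact Hs; apply zpush_id, Hc.
  - intros i Hi; destruct (HXr i Hi) as [HX [HXl HXm]], (HWr i Hi) as [HW [HWl HWm]].
    split; [apply zpush_valid; auto | split].
    + destruct (zleg_zpush cc (X i) (W i)) as [-> | ->]; auto.
    + pose proof (zrad_zpush_le cc (X i) (W i) Hc HX HW); lia.
Qed.

Lemma zpush_potential_dec_edge cc d a b X W : 1 <= cc ->
  (forall i j, E i j -> d i j = d j i) ->
  zpotential (dec_edge d a b) X -> zpotential d W ->
  zgap (zpush cc (X a) (W a)) (zpush cc (X b) (W b)) <= 4 * Z.of_nat (dec_edge d a b a b) ->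
  zpotential (dec_edge d a b) (zpush_map cc X W).
Proof.
  intros Hc Hsym HX HW Hab; apply (zpush_potential cc (dec_edge d a b) d); auto.
  intros i j Hij.
  destruct (classic ((i = a /\ j = b) \/ (i = b /\ j = a))) as [[[-> ->] | [-> ->]] | Hno].
  - right; exact Hab.
  - right; rewrite zgap_sym, dec_edge_sym by auto; exact Hab.
  - left; rewrite dec_edge_other by auto; lia.
Qed.

Lemma zcost_zpush_add cc X W :
  zcost (zpush_map cc X W) + zcost (zpush_map cc W X) = zcost X + zcost W.
Proof.
  unfold zcost, zpush_map; rewrite !zsum_add.
  unfold zsum; f_equal; apply map_ext; intros i.
  rewrite <- Z.mul_add_distr_l, zhgt_zpush_add; lia.
Qed.

Lemma ztotal_dist_zpush_lt cc P Q i0 : 1 <= cc ->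
  (forall i, (1 <= i <= n)%nat -> zvalid (P i) /\ zvalid (Q i)) ->
  (1 <= i0 <= n)%nat -> 2 * cc <= zgdist (P i0) (Q i0) ->
  ztotal_dist P (zpush_map cc Q P) < ztotal_dist P Q.
Proof.
  intros Hc HPQ Hi0 Hfar; unfold ztotal_dist, zpush_map; apply zsum_lt.
  - intros i Hi; apply in_seq in Hi; destruct (HPQ i ltac:(lia)).
    apply zgdist_zpush; auto.
  - exists i0; split; [apply in_seq; lia |].
    destruct (HPQ i0 Hi0) as [HP HQ].
    pose proof (proj2 (zgdist_zpush cc (Q i0) (P i0) Hc HQ HP) Hfar); lia.
Qed.

Lemma exists_closest_zminimizer dd P : (forall i, (1 <= i <= n)%nat -> zvalid (P i)) ->
  exists Q, zminimizer dd Q /\ forall Q', zminimizer dd Q' -> ztotal_dist P Q <= ztotal_dist P Q'.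
Proof.
  intros HP.
  destruct (Z_nonneg_least (fun z => exists Q, zpotential dd Q /\ zcost Q = z))
    as [m0 [[Q1 [HQ1 <-]] Hm0]].
  { exists (zcost zapex), zapex; split; [apply zpotential_zapex | reflexivity]. }
  { intros z [Q [HQ <-]]; eapply zcost_nonneg; eauto. }
  destruct (Z_nonneg_least (fun z => exists Q, zminimizer dd Q /\ ztotal_dist P Q = z))
    as [f0 [[Q [HQ <-]] Hf0]].
  { exists (ztotal_dist P Q1), Q1; split; [| reflexivity].
    split; [exact HQ1 | intros Q' HQ'; apply Hm0; eauto]. }
  { intros z [Q [[[_ [_ HQ]] _] <-]]; apply zsum_nonneg; intros i Hi; apply in_seq in Hi.
    apply zgdist_nonneg; [apply HP | apply HQ]; lia. }
  exists Q; split; [exact HQ | intros Q' HQ'; apply Hf0; eauto].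
Qed.

Lemma closest_zminimizer_dec_edge_near d a b P Q :
  (forall i j, E i j -> d i j = d j i) -> E a b -> (2 <= d a b)%nat ->
  zminimizer d P -> zminimizer (dec_edge d a b) Q ->
  (forall Q', zminimizer (dec_edge d a b) Q' -> ztotal_dist P Q <= ztotal_dist P Q') ->
  forall i, (1 <= i <= n)%nat -> zgdist (P i) (Q i) <= 4.
Proof.
  intros Hsym Hab Hd [HP Popt] [HQ Qopt] Qclose i0 Hi0.
  destruct (Z_le_gt_dec (zgdist (P i0) (Q i0)) 4) as [| Hfar]; [assumption | exfalso].
  pose proof Hnet as [_ [HE _]]; destruct (HE a b Hab) as [Ha [Hb _]].
  pose proof HP as [HPe [_ HPr]]; pose proof HQ as [HQe [_ HQr]].
  assert (Hval : forall i, (1 <= i <= n)%nat -> zvalid (P i) /\ zvalid (Q i))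
    by (intros i Hi; split; [apply HPr | apply HQr]; auto).
  destruct (Hval i0 Hi0) as [HPi0 HQi0]; destruct (zgdist_even _ _ HPi0 HQi0) as [m Hm].
  set (e := Z.of_nat (d a b) - 1).
  assert (HabP : zgap (P a) (P b) <= 4 * e + 4) by (specialize (HPe a b Hab); unfold e; lia).
  assert (HabQ : zgap (Q a) (Q b) <= 4 * e)
    by (specialize (HQe a b Hab); rewrite dec_edge_ab in HQe; unfold e; lia).
  (* Both candidate thresholds [m - 2] and [m] are at most half of [zgdist (P i0) (Q i0) = 2m],
     so the push moves [Q i0] strictly closer to [P i0]. *)
  destruct (zgap_zpush_threshold (m - 2) e (P a) (Q a) (P b) (Q b)) as [cc [Hcc Hgap]];
    try apply HPr; try apply HQr; auto; try (unfold e; lia).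
  assert (Hc : 1 <= cc) by lia.
  assert (Hpsi : zpotential (dec_edge d a b) (zpush_map cc Q P)).
  { apply zpush_potential_dec_edge; auto.
    rewrite dec_edge_ab; unfold e in Hgap; lia. }
  assert (Hphi : zpotential d (zpush_map cc P Q)).
  { apply (zpush_potential cc d (dec_edge d a b)); auto.
    intros i j _; left; pose proof (dec_edge_le d a b i j); lia. }
  assert (Hpsi_min : zcost (zpush_map cc Q P) <= zcost Q).
  { pose proof (Popt _ Hphi); pose proof (zcost_zpush_add cc Q P); lia. }
  assert (Hpsi_close : ztotal_dist P (zpush_map cc Q P) < ztotal_dist P Q)
    by (apply ztotal_dist_zpush_lt with i0; auto; lia).
  enough (ztotal_dist P Q <= ztotal_dist P (zpush_map cc Q P)) by lia.
  apply Qclose; split; [exact Hpsi | intros Q' HQ'; specialize (Qopt Q' HQ'); lia].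
Qed.

Local Open Scope R_scope.

Definition zpt_of (x : Tpt * R) : zpt :=
  ZPt (Zfloor (2 * tr (fst x))) (tleg (fst x)) (Zfloor (2 * snd x)).

Definition pt_of_zpt (P : zpt) : Tpt * R := (mkT (IZR (zrad P) / 2) (zleg P), IZR (zhgt P) / 2).

Lemma IZR_Zfloor_double r : is_int r \/ is_proper_half r -> IZR (Zfloor (2 * r)) = 2 * r.
Proof.
  intros [[z ->] | [z ->]].
  - replace (2 * IZR z) with (IZR (2 * z)) by (rewrite mult_IZR; lra).
    now rewrite ZfloorZ.
  - replace (2 * (IZR z + / 2)) with (IZR (2 * z + 1)) by (rewrite plus_IZR, mult_IZR; lra).
    now rewrite ZfloorZ.
Qed.

Lemma zpt_of_valid x : in_G k x -> 0 <= snd x ->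
  zvalid (zpt_of x) /\ (1 <= zleg (zpt_of x) <= k)%nat /\ pt_of_zpt (zpt_of x) = x.
Proof.
  destruct x as [[r t] y]; intros [[Hr Hl] Hg] Hy; cbn in *.
  assert (Er : IZR (Zfloor (2 * r)) = 2 * r) by (apply IZR_Zfloor_double; tauto).
  assert (Ey : IZR (Zfloor (2 * y)) = 2 * y) by (apply IZR_Zfloor_double; tauto).
  unfold zvalid, zpt_of, pt_of_zpt; cbn.
  split; [| split; [exact Hl | rewrite Er, Ey; f_equal; [f_equal |]; lra]].
  split; [apply le_IZR; lra | split; [apply le_IZR; lra |]].
  destruct Hg as [[[z1 H1] [z2 H2]] | [[z1 H1] [z2 H2]]]; subst r y.
  - exists (z1 + z2)%Z; apply eq_IZR; rewrite plus_IZR, Er, Ey, mult_IZR, plus_IZR; lra.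
  - exists (z1 + z2 + 1)%Z; apply eq_IZR; rewrite plus_IZR, Er, Ey, mult_IZR, !plus_IZR; lra.
Qed.

Lemma pt_of_zpt_in_G P : zvalid P -> (1 <= zleg P <= k)%nat -> in_G k (pt_of_zpt P).
Proof.
  intros [Hr [Hy [m Hm]]] Hl; unfold in_G, valid_T, pt_of_zpt; cbn.
  apply IZR_le in Hr; split; [split; [lra | exact Hl] |].
  destruct (Z.Even_or_Odd (zrad P)) as [[a Ha] | [a Ha]].
  - left; split; [exists a | exists (m - a)%Z].
    + rewrite Ha, mult_IZR; lra.
    + replace (zhgt P) with (2 * (m - a))%Z by lia; rewrite mult_IZR; lra.
  - right; split; [exists a | exists (m - a - 1)%Z].
    + rewrite Ha, plus_IZR, mult_IZR; lra.
    + replace (zhgt P) with (2 * (m - a - 1) + 1)%Z by lia; rewrite plus_IZR, mult_IZR; lra.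
Qed.

Lemma Rabs_half x : Rabs (x / 2) = Rabs x / 2.
Proof. unfold Rdiv; rewrite Rabs_mult, (Rabs_right (/ 2)) by lra; reflexivity. Qed.

Lemma tdist_pt_of_zpt P Q : tdist (fst (pt_of_zpt P)) (fst (pt_of_zpt Q)) = IZR (zdist P Q) / 2.
Proof.
  unfold tdist, zdist, pt_of_zpt; cbn [fst tr tleg].
  destruct (Nat.eqb _ _).
  - rewrite abs_IZR, minus_IZR.
    replace (IZR (zrad P) / 2 - IZR (zrad Q) / 2) with ((IZR (zrad P) - IZR (zrad Q)) / 2) by lra.
    apply Rabs_half.
  - rewrite plus_IZR; lra.
Qed.

Lemma gdist_pt_of_zpt P Q : gdist (pt_of_zpt P) (pt_of_zpt Q) = IZR (zgdist P Q) / 2.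
Proof.
  unfold gdist, zgdist; rewrite tdist_pt_of_zpt; unfold pt_of_zpt; cbn [snd].
  rewrite plus_IZR, abs_IZR, minus_IZR.
  replace (IZR (zhgt P) / 2 - IZR (zhgt Q) / 2) with ((IZR (zhgt P) - IZR (zhgt Q)) / 2) by lra.
  rewrite Rabs_half; lra.
Qed.

Lemma tdist_origin x : 0 <= tr x -> tdist (mkT 0 1) x = tr x.
Proof.
  intros H; unfold tdist; cbn [tleg tr].
  destruct (Nat.eqb 1 (tleg x)); [rewrite Rabs_left1 by lra |]; lra.
Qed.

Lemma gnorm_le p q r : 0 <= r -> (forall i, (1 <= i <= n)%nat -> gdist (p i) (q i) <= r) ->
  gnorm n p q <= r.
Proof.
  intros Hr H; unfold gnorm.
  assert (Hl : forall i, In i (seq 1 n) -> gdist (p i) (q i) <= r)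
    by (intros i Hi; apply in_seq in Hi; apply H; lia).
  induction (seq 1 n) as [| i l IH]; cbn; [lra |].
  apply Rmax_lub; [apply Hl; left; reflexivity | apply IH; intros; apply Hl; right; assumption].
Qed.


Lemma zpotential_of_potential dd p : in_Gn n k p -> is_potential n k E dd M p ->
  zpotential dd (fun i => zpt_of (p i)) /\
  forall i, (1 <= i <= n)%nat -> pt_of_zpt (zpt_of (p i)) = p i.
Proof.
  intros HG [Hedge [Hterm Hrng]]; pose proof Hnet as [_ [HE _]].
  assert (Hp : forall i, (1 <= i <= n)%nat ->
    zvalid (zpt_of (p i)) /\ (1 <= zleg (zpt_of (p i)) <= k)%nat /\ pt_of_zpt (zpt_of (p i)) = p i)
    by (intros i Hi; apply zpt_of_valid; [apply HG | apply Hrng]; auto).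
  split; [split; [| split] | intros i Hi; apply Hp, Hi].
  - intros i j Hij; destruct (HE i j Hij) as [Hi [Hj _]].
    specialize (Hedge i j Hij).
    rewrite <- (proj2 (proj2 (Hp i Hi))), <- (proj2 (proj2 (Hp j Hj))), tdist_pt_of_zpt in Hedge.
    unfold pt_of_zpt in Hedge; cbn [snd] in Hedge.
    apply le_IZR; unfold zgap; rewrite !minus_IZR, mult_IZR, <- INR_IZR_INZ; lra.
  - intros s Hs; destruct (Hterm s Hs) as [Hr [Hl Hy]].
    unfold zpt_of; rewrite Hr, Hl, Hy, Rmult_0_r.
    replace (2 * INR M) with (IZR (2 * Z.of_nat M)) by (rewrite mult_IZR, <- INR_IZR_INZ; lra).
    now rewrite ZfloorZ, ZfloorZ.
  - intros i Hi; destruct (Hp i Hi) as [Hv [Hl Hback]]; split; [exact Hv | split; [exact Hl |]].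
    destruct (Hrng i Hi) as [_ Hb]; rewrite <- Hback in Hb; unfold pt_of_zpt at 1 in Hb.
    assert (0 <= IZR (zrad (zpt_of (p i)))) by (apply IZR_le, Hv).
    rewrite tdist_origin in Hb by (cbn [fst tr]; lra); cbn [fst tr] in Hb.
    apply le_IZR; rewrite mult_IZR, <- INR_IZR_INZ; lra.
Qed.

Lemma potential_of_zpotential dd Q : zpotential dd Q ->
  in_Gn n k (fun i => pt_of_zpt (Q i)) /\ is_potential n k E dd M (fun i => pt_of_zpt (Q i)).
Proof.
  intros [Hedge [Hterm Hrng]]; split; [| split; [| split]].
  - intros i Hi; destruct (Hrng i Hi) as [Hv [Hl _]]; apply pt_of_zpt_in_G; auto.
  - intros i j Hij; specialize (Hedge i j Hij); rewrite tdist_pt_of_zpt.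
    unfold pt_of_zpt; cbn [snd]; apply IZR_le in Hedge.
    unfold zgap in Hedge; rewrite !minus_IZR, mult_IZR, <- INR_IZR_INZ in Hedge; lra.
  - intros s Hs; rewrite (Hterm s Hs); unfold pt_of_zpt; cbn [zrad zleg zhgt fst snd tr tleg].
    rewrite mult_IZR, <- INR_IZR_INZ; repeat split; lra.
  - intros i Hi; destruct (Hrng i Hi) as [[Hr [Hy _]] [_ Hb]].
    apply IZR_le in Hr, Hy, Hb; rewrite mult_IZR, <- INR_IZR_INZ in Hb.
    unfold pt_of_zpt; cbn [snd fst]; rewrite tdist_origin by (cbn [tr]; lra); cbn [tr]; split; lra.
Qed.

Lemma cost_pt_of_zpt Q : cost n k c (fun i => pt_of_zpt (Q i)) = IZR (zcost Q) / 2.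
Proof.
  unfold cost, zcost, zsum; induction (seq (S k) (n - k)) as [| i l IH]; cbn [map fold_right].
  - lra.
  - rewrite IH, plus_IZR, mult_IZR, <- INR_IZR_INZ; unfold pt_of_zpt; cbn [snd]; lra.
Qed.

Lemma cost_ext q q' : (forall i, (1 <= i <= n)%nat -> q i = q' i) -> cost n k c q = cost n k c q'.
Proof.
  intros H; unfold cost; f_equal; apply map_ext_in; intros i Hi.
  apply in_seq in Hi; rewrite H by lia; reflexivity.
Qed.

Lemma h_potential dd q : is_potential n k E dd M q -> h n k E c dd M q = Finite (cost n k c q).
Proof.
  intros H; unfold h; destruct (excluded_middle_informative _); [reflexivity | contradiction].
Qed.

Lemma h_not_potential dd q : ~ is_potential n k E dd M q -> h n k E c dd M q = p_infty.
Proof.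
  intros H; unfold h; destruct (excluded_middle_informative _); [contradiction | reflexivity].
Qed.

Lemma zminimizer_of_minimizer dd p : is_minimizer n k E c dd M p ->
  zminimizer dd (fun i => zpt_of (p i)) /\
  forall i, (1 <= i <= n)%nat -> pt_of_zpt (zpt_of (p i)) = p i.
Proof.
  intros [HG Hmin].
  assert (Hp : is_potential n k E dd M p).
  { destruct (potential_of_zpotential dd _ (zpotential_zapex dd)) as [HG0 HP0].
    specialize (Hmin _ HG0); rewrite (h_potential _ _ HP0) in Hmin.
    destruct (classic (is_potential n k E dd M p)) as [| Hnp]; [assumption |].
    rewrite (h_not_potential _ _ Hnp) in Hmin; contradiction. }
  destruct (zpotential_of_potential dd p HG Hp) as [HZ Hback].
  split; [split; [exact HZ |] | exact Hback].
  intros Q HQ; destruct (potential_of_zpotential dd Q HQ) as [HGQ HPQ].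
  specialize (Hmin _ HGQ); rewrite (h_potential _ _ HPQ), (h_potential _ _ Hp) in Hmin; cbn in Hmin.
  rewrite (cost_ext p (fun i => pt_of_zpt (zpt_of (p i)))) in Hmin by (intros; symmetry; auto).
  rewrite !cost_pt_of_zpt in Hmin; apply le_IZR; lra.
Qed.

Lemma minimizer_of_zminimizer dd Q : zminimizer dd Q ->
  is_minimizer n k E c dd M (fun i => pt_of_zpt (Q i)).
Proof.
  intros [HQ Qmin]; destruct (potential_of_zpotential dd Q HQ) as [HG HP].
  split; [exact HG |]; intros q Hq; rewrite (h_potential _ _ HP).
  destruct (classic (is_potential n k E dd M q)) as [Hpq | Hnpq];
    [| rewrite (h_not_potential _ _ Hnpq); exact I].
  rewrite (h_potential _ _ Hpq); cbn.
  destruct (zpotential_of_potential dd q Hq Hpq) as [HZ Hback].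
  rewrite (cost_ext q (fun i => pt_of_zpt (zpt_of (q i)))) by (intros; symmetry; auto).
  specialize (Qmin _ HZ); apply IZR_le in Qmin.
  rewrite !cost_pt_of_zpt; lra.
Qed.

End Network.

Local Open Scope R_scope.

Theorem theorem3p12 (n k : nat) (E : nat -> nat -> Prop) (c : nat -> nat)
    (d : nat -> nat -> nat) (M : nat) (a b : nat) (p : nat -> Tpt * R) :
  simple_network n k E ->
  (* d is a cost on unordered edges, positive integer valued *)
  (forall i j, E i j -> d i j = d j i) ->
  (forall i j, E i j -> (0 < d i j)%nat) ->
  (0 < M)%nat ->
  E a b -> Nat.Even (d a b) ->
  is_minimizer n k E c d M p ->
  exists q : nat -> Tpt * R,
    is_minimizer n k E c (dec_edge d a b) M q /\ gnorm n p q <= 2.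
Proof.
  intros Hnet Hsym Hpos _ Hab [m Hm] Hp.
  assert (Hd : (2 <= d a b)%nat) by (specialize (Hpos a b Hab); lia).
  destruct (zminimizer_of_minimizer n k E M c Hnet d p Hp) as [HP Hback].
  destruct (exists_closest_zminimizer n k E M c Hnet (dec_edge d a b) (fun i => zpt_of (p i)))
    as [Q [HQ Qclose]].
  { intros i Hi; apply HP, Hi. }
  exists (fun i => pt_of_zpt (Q i)); split; [apply minimizer_of_zminimizer; auto |].
  apply gnorm_le; [lra |]; intros i Hi.
  rewrite <- (Hback i Hi), gdist_pt_of_zpt.
  pose proof (closest_zminimizer_dec_edge_near n k E M c Hnet d a b _ Q
    Hsym Hab Hd HP HQ Qclose i Hi) as Hnear.
  apply IZR_le in Hnear; lra.
Qed.
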